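(* Let $G$ be a connected graph with a vertex $u$. Let $v\in N(u)$ with $d(v)\le d(u)-2$, and let $w\in V(G)\setminus N[u]$ be a neighbor of $v$. If $|N(v)\setminus N[u]|\in\{1,2\}$ and $N(z)\setminus \{v\}\subseteq N(v)\setminus N(u)$ for every $z\in N(v)\setminus N[u]$, then $q(G-vw+uw)>q(G)$.
   Context: $N(x)$ is the neighborhood of $x$, $N[x]=N(x)\cup\{x\}$, $d(x)=|N(x)|$. $Q(G)=D(G)+A(G)$ is the signless Laplacian and $q(G)$ its largest eigenvalue. $G-vw+uw$ denotes the graph obtained by deleting edge $vw$ and adding edge $uw$. *)

From HB Require Import structures.
From mathcomp Require Import all_boot all_order all_algebra.
From mathcomp Require Import reals.
Set Implicit Arguments. Unset Strict Implicit. Unset Printing Implicit Defensive.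
Import Order.TTheory GRing.Theory Num.Theory.
Local Open Scope ring_scope.

Definition simple_graph (n : nat) (e : rel 'I_n) : Prop :=
  symmetric e /\ irreflexive e.

Definition connected_graph (n : nat) (e : rel 'I_n) : Prop :=
  forall x y : 'I_n, connect e x y.

Definition nbhd (n : nat) (e : rel 'I_n) (x : 'I_n) : {set 'I_n} :=
  [set y | e x y].
Definition deg (n : nat) (e : rel 'I_n) (x : 'I_n) : nat := #|nbhd e x|.

Definition adjmx (R : nzRingType) (n : nat) (e : rel 'I_n) : 'M[R]_n :=
  \matrix_(i, j) (e i j)%:R.
Definition degmx (R : nzRingType) (n : nat) (e : rel 'I_n) : 'M[R]_n :=
  diag_mx (\row_i (deg e i)%:R).
Definition signless_laplacian (R : nzRingType) (n : nat) (e : rel 'I_n)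
  : 'M[R]_n := degmx R e + adjmx R e.

Definition is_q (R : realFieldType) (n : nat) (e : rel 'I_n) (q : R) : Prop :=
  eigenvalue (signless_laplacian R e) q /\
  forall a : R, eigenvalue (signless_laplacian R e) a -> a <= q.

Definition move_edge (n : nat) (e : rel 'I_n) (v w u : 'I_n) : rel 'I_n :=
  fun x y =>
    (e x y && ~~ (((x == v) && (y == w)) || ((x == w) && (y == v))))
    || ((x == u) && (y == w)) || ((x == w) && (y == u)).

From HB Require Import structures.
From mathcomp Require Import all_boot all_order all_algebra.
From mathcomp Require Import reals complex ring lra zify.
Import Order.TTheory GRing.Theory Num.Theory.
Local Open Scope ring_scope.

Set Implicit Arguments.
Unset Strict Implicit.
Unset Printing Implicit Defensive.

(* Since Q(G) is symmetric, q(G) is the maximum of the Rayleigh quotient; taking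
   entrywise absolute values of a q-eigenvector cannot lower the quotient, so Q(G)
   has a nonnegative q-eigenvector x, which is positive as G is connected.  Every
   z in P = N(v) \ N[u] has its neighbours in {v} and P, and with |P| <= 2 and
   q >= d(u) >= |P| + 3 this bounds the weight of P by x_v; comparing the
   eigenvalue equations at u and v then yields x_v < x_u.  Moving vw to uw raises
   x^T Q x by (x_u + x_w)^2 - (x_v + x_w)^2 > 0, so q(G - vw + uw) > q(G). *)

Definition mxform (R : nzRingType) n (A : 'M[R]_n) (a b : 'rV[R]_n) : R :=
  (a *m A *m b^T) 0 0.

Lemma mxformE (R : nzRingType) n (A : 'M[R]_n) a b :
  mxform A a b = \sum_i \sum_j a 0 i * A i j * b 0 j.
Proof.
rewrite /mxform mxE exchange_big /=; apply: eq_bigr => j _.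
by rewrite !mxE mulr_suml.
Qed.

Lemma mxform_row (R : nzRingType) n (A : 'M[R]_n) a b :
  mxform A a b = \sum_j (a *m A) 0 j * b 0 j.
Proof. by rewrite /mxform mxE; apply: eq_bigr => j _; rewrite !mxE. Qed.

Lemma mxform_sym (R : comNzRingType) n (A : 'M[R]_n) a b :
  A^T = A -> mxform A b a = mxform A a b.
Proof.
move=> symA; rewrite /mxform -[in LHS]symA.
transitivity ((b *m A^T *m a^T)^T 0 0); first by rewrite [RHS]mxE.
by rewrite !trmx_mul !trmxK mulmxA.
Qed.

Lemma mxform_line (R : comNzRingType) n (A : 'M[R]_n) a c t :
  mxform A (a + t *: c) (a + t *: c) =
  mxform A a a + t * (mxform A a c + mxform A c a) + t ^+ 2 * mxform A c c.
Proof.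
rewrite /mxform linearD linearZ /= !mulmxDl !mulmxDr -!scalemxAl -!scalemxAr.
by rewrite !mxE; ring.
Qed.

Lemma dot_selfE (R : nzRingType) n (y : 'rV[R]_n) :
  (y *m y^T) 0 0 = \sum_i y 0 i ^+ 2.
Proof. by rewrite mxE; apply: eq_bigr => i _; rewrite mxE. Qed.

Lemma dot_self_ge0 (R : realDomainType) n (y : 'rV[R]_n) : 0 <= (y *m y^T) 0 0.
Proof. by rewrite dot_selfE sumr_ge0 // => i _; rewrite sqr_ge0. Qed.

Lemma dot_self_eq0 (R : realDomainType) n (y : 'rV[R]_n) :
  ((y *m y^T) 0 0 == 0) = (y == 0).
Proof.
rewrite dot_selfE psumr_eq0 => [|i _]; last exact: sqr_ge0.
apply/allP/eqP => [y0|-> i _]; last by rewrite mxE expr2 mulr0 eqxx.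
apply/rowP => i; apply/eqP; rewrite mxE -sqrf_eq0.
exact: (implyP (y0 i (mem_index_enum i))).
Qed.

Lemma psd_mxform_eq0 (R : realFieldType) n (B : 'M[R]_n) x :
  B^T = B -> (forall y, 0 <= mxform B y y) -> mxform B x x = 0 -> x *m B = 0.
Proof.
move=> symB psdB Bx0; set z := x *m B.
have s_ge0 := dot_self_ge0 z; set s := (z *m z^T) 0 0 in s_ge0 *.
have b_ge0 := psdB z; set b := mxform B z z in b_ge0.
have xz : mxform B x z = s by rewrite /mxform.
pose t := s / (b + 1).
have tb : t * (b + 1) = s by rewrite divfK // gt_eqF // ltr_wpDl.
have t_ge0 : 0 <= t by rewrite divr_ge0 // addr_ge0.
(* On the line x - t z the form equals t (t b - 2 s), negative unless s = 0. *)
have := psdB (x - t *: z).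
rewrite -scaleNr mxform_line [mxform B z x](mxform_sym _ _ symB) xz Bx0 -/b.
rewrite add0r => line_ge0.
have /eqP : s = 0 by nra.
by rewrite dot_self_eq0 => /eqP.
Qed.

Lemma rayleigh_eq_eigen (R : realFieldType) n (A : 'M[R]_n) (l : R) x :
  A^T = A -> (forall y, mxform A y y <= l * (y *m y^T) 0 0) ->
  mxform A x x = l * (x *m x^T) 0 0 -> x *m A = l *: x.
Proof.
move=> symA le_l eq_l; set B := l%:M - A.
have formB y : mxform B y y = l * (y *m y^T) 0 0 - mxform A y y.
  by rewrite /mxform mulmxBr mul_mx_scalar mulmxBl -scalemxAl !mxE.
have /eqP : x *m B = 0.
  apply: psd_mxform_eq0 => [|y|]; first by rewrite linearB /= tr_scalar_mx symA.
    by rewrite formB subr_ge0.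
  by rewrite formB eq_l subrr.
by rewrite mulmxBr mul_mx_scalar subr_eq0 => /eqP.
Qed.

Lemma rayleigh_lt (R : realFieldType) n (A B : 'M[R]_n) (a b : R) x :
  x != 0 -> x *m A = a *: x -> (forall y, mxform B y y <= b * (y *m y^T) 0 0) ->
  mxform A x x < mxform B x x -> a < b.
Proof.
move=> x_neq0 xA le_b lt_AB.
have norm_gt0 : 0 < (x *m x^T) 0 0 by rewrite lt0r dot_self_eq0 x_neq0 dot_self_ge0.
rewrite -(ltr_pM2r norm_gt0) (lt_le_trans _ (le_b x)) //.
by rewrite /mxform xA -scalemxAl mxE in lt_AB.
Qed.

Lemma row_neq0 (R : nzRingType) n (y : 'rV[R]_n) : y != 0 -> exists i, y 0 i != 0.
Proof.
move=> y_neq0; apply/existsP; apply: contraNT y_neq0 => /existsPn y0.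
by apply/eqP/rowP => i; rewrite mxE; apply/eqP/negPn.
Qed.

(* The spectral theorem is only available over algebraically closed fields, hence
   the detour through the complexification R[i]. *)
Section Rayleigh.
Import Num.Def.
Local Open Scope sesquilinear_scope.
Local Open Scope complex_scope.

Variables (R : rcfType) (n : nat) (A : 'M[R]_n).
Hypothesis symA : A^T = A.

Local Notation toC := (real_complex R).
Local Notation Ac := (map_mx toC A).

Lemma complexification_hermitian : Ac \is hermsymmx.
Proof.
apply/is_hermitianmxP; rewrite expr0 scale1r.
by apply/matrixP => i j; rewrite !mxE conj_Creal ?complex_real // -[in LHS]symA mxE.
Qed.

Lemma spectral_diag_le (l : R) :
  (forall a, eigenvalue A a -> a <= l) ->
  forall j, spectral_diag Ac 0 j <= l%:C.
Proof.
move=> le_l j; set P := spectralmx Ac; set d := spectral_diag Ac.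
have AcE : Ac = invmx P *m diag_mx d *m P.
  exact/orthomx_spectralP/hermitian_normalmx/complexification_hermitian.
have d_real : d 0 j \is Num.real.
  exact: mxOverP (hermitian_spectral_diag_real complexification_hermitian) _ _.
have : eigenvalue Ac (d 0 j).
  apply/eigenvalueP; exists (row j P).
    rewrite -row_mul AcE !mulmxA mulmxV ?spectral_unit // mul1mx row_mul.
    by rewrite row_diag_mx -scalemxAl -rowE.
  apply/eqP => /(congr1 (mulmx^~ (invmx P))).
  rewrite -row_mul mulmxV ?spectral_unit // mul0mx => /rowP/(_ j).
  by rewrite !mxE eqxx => /eqP; rewrite oner_eq0.
rewrite -(RRe_real d_real) eigenvalue_map => /le_l.
by rewrite -lecR.
Qed.

Lemma rayleigh_le (l : R) :
  (forall a, eigenvalue A a -> a <= l) ->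
  forall y, mxform A y y <= l * (y *m y^T) 0 0.
Proof.
move=> le_l y; set P := spectralmx Ac; set d := spectral_diag Ac.
have AcE : Ac = P^t* *m diag_mx d *m P.
  rewrite -invmx_unitary ?spectral_unitarymx //.
  exact/orthomx_spectralP/hermitian_normalmx/complexification_hermitian.
have PtP : P^t* *m P = 1%:M.
  by rewrite -invmx_unitary ?spectral_unitarymx // mulVmx ?spectral_unit.
pose f : {rmorphism R -> R[i]} := toC.
pose yc := map_mx f y; pose w := P *m yc^T.
have wt : w^t* = yc *m P^t*.
  have ycc : map_mx conjC yc = yc.
    by apply/matrixP => i j; rewrite !mxE conj_Creal ?complex_real.
  by rewrite /w trmx_mul trmxK map_mxM ycc.
have f_entry (M : 'M[R]_1) : f (M 0 0) = map_mx f M 0 0 by rewrite mxE.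
have formE : f (mxform A y y) = (w^t* *m diag_mx d *m w) 0 0.
  by rewrite f_entry !map_mxM -map_trmx AcE wt /w !mulmxA.
have normE : f (l * (y *m y^T) 0 0) = l%:C * (w^t* *m w) 0 0.
  by rewrite rmorphM f_entry map_mxM -map_trmx wt /w !mulmxA -(mulmxA yc) PtP mulmx1.
rewrite -lecR -/f formE normE mul_mx_diag !mxE big_distrr /=.
apply: ler_sum => j _; rewrite !mxE mulrAC [l%:C * _]mulrC.
by rewrite ler_wpM2l ?spectral_diag_le // mulrC mul_conjC_ge0.
Qed.

End Rayleigh.

Lemma diag_le_max_eigenvalue (R : rcfType) n (A : 'M[R]_n) (l : R) :
  A^T = A -> (forall a, eigenvalue A a -> a <= l) -> forall i, A i i <= l.
Proof.
move=> symA le_l i; have := rayleigh_le symA le_l (delta_mx 0 i).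
by rewrite /mxform !trmx_delta mul_delta_mx -rowE -colE !mxE !eqxx mulr1.
Qed.

Lemma nonneg_eigenvector (R : rcfType) n (A : 'M[R]_n) (l : R) :
  A^T = A -> (forall i j, 0 <= A i j) ->
  eigenvalue A l -> (forall a, eigenvalue A a -> a <= l) ->
  exists2 x : 'rV[R]_n, x != 0 & (forall i, 0 <= x 0 i) /\ x *m A = l *: x.
Proof.
move=> symA A_ge0 eig_l le_l; have [x0 x0A x0_neq0] := eigenvalueP eig_l.
pose x := map_mx (fun a => `|a|) x0.
have normE : (x *m x^T) 0 0 = (x0 *m x0^T) 0 0.
  by rewrite !dot_selfE; apply: eq_bigr => i _; rewrite mxE real_normK ?num_real.
have formx0 : mxform A x0 x0 = l * (x0 *m x0^T) 0 0.
  by rewrite /mxform x0A -scalemxAl mxE.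
have form_le : mxform A x0 x0 <= mxform A x x.
  rewrite !mxformE; apply: ler_sum => i _; apply: ler_sum => j _.
  by rewrite !mxE -{2}(ger0_norm (A_ge0 i j)) -!normrM ler_norm.
exists x; last split.
- by rewrite -dot_self_eq0 normE dot_self_eq0.
- by move=> i; rewrite mxE normr_ge0.
apply: rayleigh_eq_eigen => //; first exact: rayleigh_le.
by apply/eqP; rewrite eq_le rayleigh_le //= normE -formx0.
Qed.

Lemma sum_subset_le (R : numDomainType) (I : finType) (F : I -> R) (A B : {set I}) :
  (forall i, 0 <= F i) -> A \subset B -> \sum_(i in A) F i <= \sum_(i in B) F i.
Proof.
move=> F_ge0 AB; rewrite [X in _ <= X](big_setID A) /= (setIidPr AB) lerDl.
exact: sumr_ge0.
Qed.

Lemma sum_setU1_le (R : numDomainType) (I : finType) (F : I -> R) (A : {set I}) a :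
  (forall i, 0 <= F i) -> \sum_(i in a |: A) F i <= F a + \sum_(i in A) F i.
Proof.
move=> F_ge0; have [aA|aNA] := boolP (a \in A); last by rewrite big_setU1.
have /setUidPr -> : [set a] \subset A by rewrite sub1set.
by rewrite lerDr.
Qed.

Section SignlessLaplacian.
Variables (n : nat) (e : rel 'I_n).

Lemma sum_nbhd (R : nzRingType) j (F : 'I_n -> R) :
  \sum_(i in nbhd e j) F i = \sum_i (e j i)%:R * F i.
Proof.
rewrite big_mkcond; apply: eq_bigr => i _.
by rewrite inE; case: (e j i); rewrite ?mul1r ?mul0r.
Qed.

Lemma deg_sum (R : nzRingType) j : (deg e j)%:R = \sum_i (e j i)%:R :> R.
Proof.
transitivity (\sum_(i in nbhd e j) (1 : R)); first by rewrite sumr_const.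
by rewrite sum_nbhd; apply: eq_bigr => i _; rewrite mulr1.
Qed.

Lemma signless_laplacianE (R : nzRingType) i j :
  signless_laplacian R e i j = (i == j)%:R * (deg e i)%:R + (e i j)%:R.
Proof. by rewrite !mxE mulr_natl. Qed.

Lemma signless_laplacian_ge0 (R : numDomainType) i j :
  0 <= signless_laplacian R e i j.
Proof. by rewrite signless_laplacianE addr_ge0 ?mulr_ge0. Qed.

Lemma signless_laplacian_row (R : comNzRingType) (y : 'rV[R]_n) j :
  (y *m signless_laplacian R e) 0 j = (deg e j)%:R * y 0 j + \sum_i (e i j)%:R * y 0 i.
Proof.
rewrite mulmxDr mxE mul_mx_diag !mxE mulrC; congr (_ + _).
by apply: eq_bigr => i _; rewrite mxE mulrC.
Qed.

Lemma signless_laplacian_form (R : comNzRingType) (y : 'rV[R]_n) :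
  mxform (signless_laplacian R e) y y =
  \sum_i \sum_j (e i j)%:R * (y 0 i ^+ 2 + y 0 i * y 0 j).
Proof.
rewrite mxform_row.
under eq_bigr => j _ do rewrite signless_laplacian_row mulrDl mulr_suml.
rewrite big_split /= [X in _ + X]exchange_big -big_split /=.
apply: eq_bigr => i _; rewrite deg_sum !mulr_suml -big_split /=.
by apply: eq_bigr => j _; ring.
Qed.

Hypothesis sym_e : symmetric e.

Lemma signless_laplacian_sym (R : nzRingType) :
  (signless_laplacian R e)^T = signless_laplacian R e.
Proof.
apply/matrixP => i j; rewrite mxE !signless_laplacianE sym_e eq_sym.
by have [->|] := eqVneq j i; rewrite ?mul0r.
Qed.

Lemma deg_le_max_eigenvalue (R : rcfType) (l : R) :
  irreflexive e -> (forall a, eigenvalue (signless_laplacian R e) a -> a <= l) ->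
  forall i, (deg e i)%:R <= l.
Proof.
move=> irr_e le_l i; have := diag_le_max_eigenvalue (signless_laplacian_sym R) le_l i.
by rewrite signless_laplacianE eqxx irr_e mul1r addr0.
Qed.

Lemma signless_laplacian_eigen (R : comNzRingType) (y : 'rV[R]_n) q :
  y *m signless_laplacian R e = q *: y ->
  forall j, q * y 0 j = (deg e j)%:R * y 0 j + \sum_(i in nbhd e j) y 0 i.
Proof.
move=> yQ j; have := congr1 (fun M : 'rV[R]_n => M 0 j) yQ.
rewrite signless_laplacian_row mxE sum_nbhd => <-; congr (_ + _).
by apply: eq_bigr => i _; rewrite sym_e.
Qed.

End SignlessLaplacian.

Section SignlessEigenvector.
Variables (R : realFieldType) (n : nat) (e : rel 'I_n) (q : R) (x : 'I_n -> R).
Hypothesis x_ge0 : forall i, 0 <= x i.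
Hypothesis eigen_x :
  forall j, q * x j = (deg e j)%:R * x j + \sum_(i in nbhd e j) x i.

Lemma eigenvector_gt0 b : connected_graph e -> x b != 0 -> forall i, 0 < x i.
Proof.
move=> conn_e xb_neq0 i.
have zero_nbhd j k : x j = 0 -> e j k -> x k = 0.
  move=> xj0 ejk; have /psumr_eq0P : \sum_(l in nbhd e j) x l = 0.
    by have := eigen_x j; rewrite xj0 !mulr0 add0r.
  by apply => [l _|]; rewrite ?inE.
have zero_path j k : connect e j k -> x j = 0 -> x k = 0.
  move=> /connectP[p + ->]; elim: p j => [|l p IHp] j //= /andP[ejl path_l] xj0.
  exact: IHp path_l (zero_nbhd j l xj0 ejl).
rewrite lt_def x_ge0 andbT; apply: contra xb_neq0 => /eqP xi0.
exact/eqP/(zero_path i).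
Qed.

Lemma weight_le_of_closed_nbhd (P : {set 'I_n}) v :
  (forall z, z \in P -> nbhd e z \subset v |: (P :\ z)) ->
  (3 * #|P|)%:R <= q + 1 -> \sum_(z in P) x z <= x v.
Proof.
move=> nbhdP q_ge; set k := #|P|; set s := \sum_(z in P) x z.
have s_ge0 : 0 <= s by rewrite sumr_ge0.
have z_le z : z \in P -> (q - k%:R + 1) * x z <= x v + s.
  move=> zP; have sub_z := nbhdP z zP.
  have deg_z : (deg e z)%:R <= k%:R :> R.
    rewrite ler_nat (leq_trans (subset_leq_card sub_z)) // cardsU1.
    by rewrite /k (cardsD1 z P) zP leq_add2r leq_b1.
  have sum_z : \sum_(i in nbhd e z) x i <= x v + (s - x z).
    apply: le_trans (sum_subset_le x_ge0 sub_z) (le_trans (sum_setU1_le _ _ x_ge0) _).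
    by rewrite /s (big_setD1 z zP) /= addrAC subrr add0r.
  have := ler_wpM2r (x_ge0 z) deg_z; have := eigen_x z; nra.
(* Summing over P gives (q + 1 - 2 k) s <= k x_v, whence the factor 3. *)
have : (q - k%:R + 1) * s <= k%:R * (x v + s).
  by rewrite mulr_sumr mulr_natl -[X in _ <= X]sumr_const ler_sum.
have [/cards0_eq P0|k_gt0 sum_le] := posnP k; first by rewrite /s P0 big_set0.
rewrite -(ler_pM2l (_ : 0 < k%:R)) ?ltr0n //.
have : 0 <= (q + 1 - 3 * k%:R) * s by rewrite mulr_ge0 // subr_ge0 -natrM.
nra.
Qed.

Lemma eigenvector_lt_of_deg_gap (u v : 'I_n) :
  symmetric e -> irreflexive e -> e u v ->
  (deg e v + 2 <= deg e u)%N -> (deg e u)%:R <= q -> 0 < x v ->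
  \sum_(z in nbhd e v :\: (u |: nbhd e u)) x z <= x v -> x v < x u.
Proof.
move=> sym_e irr_e euv deg_uv deg_u_le xv_gt0 sumP_le.
set I := nbhd e v :&: nbhd e u.
have sum_v : \sum_(i in nbhd e v) x i =
    x u + \sum_(i in I) x i + \sum_(i in nbhd e v :\: (u |: nbhd e u)) x i.
  rewrite (big_setID (nbhd e u)) /= -/I [X in _ + X](big_setD1 u) /=; last first.
    by rewrite !inE sym_e euv irr_e.
  by rewrite setDDl setUC addrA [_ + x u]addrC.
have sum_u : x v + \sum_(i in I) x i <= \sum_(i in nbhd e u) x i.
  rewrite [X in _ <= X](big_setID (nbhd e v)) /= setIC -/I [X in _ <= X]addrC lerD2r.
  rewrite (big_setD1 v) /=; last by rewrite !inE euv irr_e.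
  by rewrite lerDl sumr_ge0.
have eig_u := eigen_x u; have eig_v := eigen_x v; have xu_ge0 := x_ge0 u.
rewrite -(ler_nat R) natrD in deg_uv.
(* The equations give (q + 1 - d(u)) x_u >= (q - d(v)) x_v, while d(u) >= d(v) + 2. *)
rewrite ltNge; apply/negP => xu_le.
have : 0 <= (q + 1 - (deg e u)%:R) * (x v - x u) by rewrite mulr_ge0 // ?subr_ge0; lra.
have : 0 <= ((deg e u)%:R - (deg e v)%:R - 2) * x v by rewrite mulr_ge0 ?subr_ge0; lra.
nra.
Qed.

End SignlessEigenvector.

Lemma sum_delta (R : nzRingType) (I : finType) (a : I) (F : I -> R) :
  \sum_i (i == a)%:R * F i = F a.
Proof.
rewrite (bigD1 a) //= eqxx mul1r big1 ?addr0 // => i /negbTE ->.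
by rewrite mul0r.
Qed.

Lemma sum_sum_pair (R : nzRingType) (I : finType) (a b : I) (g : I -> I -> R) :
  a != b ->
  \sum_i \sum_j (((i == a) && (j == b)) || ((i == b) && (j == a)))%:R * g i j =
  g a b + g b a.
Proof.
move=> ab.
have pairE i j : (((i == a) && (j == b)) || ((i == b) && (j == a)))%:R =
    (i == a)%:R * (j == b)%:R + (i == b)%:R * (j == a)%:R :> R.
  have [-> | ia] := eqVneq i a; first by rewrite (negbTE ab) orbF mul1r mul0r addr0.
  by rewrite /= mul0r add0r -natrM mulnb.
under eq_bigr => i _ do under eq_bigr => j _ do rewrite pairE mulrDl -!mulrA.
under eq_bigr => i _ do rewrite big_split /= -!mulr_sumr !sum_delta.
by rewrite big_split /= !sum_delta.
Qed.

Lemma natr_or_andN (R : nzRingType) (b c d : bool) :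
  (c -> b) -> (d -> ~~ b) -> ((b && ~~ c) || d)%:R = b%:R - c%:R + d%:R :> R.
Proof.
case: b; case: c; case: d => cb db /=; rewrite ?subrr ?subr0 ?add0r ?addr0 //.
all: by [have := db isT | have := cb isT].
Qed.

Section MoveEdge.
Variables (n : nat) (e : rel 'I_n) (u v w : 'I_n).
Hypothesis sym_e : symmetric e.

Lemma move_edge_sym : symmetric (move_edge e v w u).
Proof.
move=> i j; rewrite /move_edge sym_e.
by case: (i == u); case: (i == v); case: (i == w); case: (j == u);
  case: (j == v); case: (j == w); rewrite /= ?orbF ?andbT.
Qed.

Hypotheses (evw : e v w) (nuw : ~~ e u w) (vw : v != w) (uw : u != w).

Lemma sum_move_edge (R : comNzRingType) (g : 'I_n -> 'I_n -> R) :
  \sum_i \sum_j (move_edge e v w u i j)%:R * g i j =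
  \sum_i \sum_j (e i j)%:R * g i j + (g u w + g w u) - (g v w + g w v).
Proof.
have moveE i j : (move_edge e v w u i j)%:R = (e i j)%:R
    - (((i == v) && (j == w)) || ((i == w) && (j == v)))%:R
    + (((i == u) && (j == w)) || ((i == w) && (j == u)))%:R :> R.
  rewrite /move_edge -orbA natr_or_andN //.
    by case/orP => /andP[/eqP-> /eqP->]; rewrite // sym_e.
  by case/orP => /andP[/eqP-> /eqP->]; rewrite // sym_e.
under eq_bigr => i _ do under eq_bigr => j _ do rewrite moveE mulrDl mulrBl.
under eq_bigr => i _ do rewrite big_split /= sumrB.
by rewrite big_split /= sumrB !sum_sum_pair // addrAC.
Qed.

Lemma signless_laplacian_move_edge (R : comNzRingType) (y : 'rV[R]_n) :
  mxform (signless_laplacian R (move_edge e v w u)) y y =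
  mxform (signless_laplacian R e) y y + (y 0 u + y 0 w) ^+ 2 - (y 0 v + y 0 w) ^+ 2.
Proof.
rewrite !signless_laplacian_form.
rewrite (sum_move_edge (fun i j => y 0 i ^+ 2 + y 0 i * y 0 j)) /=.
ring.
Qed.

End MoveEdge.

Section OuterNeighbours.
Variables (n : nat) (e : rel 'I_n) (u v : 'I_n).
Hypotheses (sym_e : symmetric e) (irr_e : irreflexive e).
Local Notation P := (nbhd e v :\: (u |: nbhd e u)).

Lemma card_outer_lt_deg : e u v -> (#|P| < deg e v)%N.
Proof.
move=> euv; apply: proper_card; apply/properP; split; first exact: subsetDl.
by exists u; rewrite !inE ?eqxx // sym_e.
Qed.

Lemma outer_card_le :
  e u v -> (#|P| <= 2)%N -> (deg e v + 2 <= deg e u)%N -> (3 * #|P| <= deg e u + 1)%N.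
Proof. by move=> /card_outer_lt_deg; lia. Qed.

Lemma outer_nbhd_sub z :
  z \in P -> nbhd e z :\ v \subset nbhd e v :\: nbhd e u ->
  nbhd e z \subset v |: (P :\ z).
Proof.
move=> zP sub_z; apply/subsetP => i; rewrite !inE => ezi.
have [//|iv] := eqVneq i v.
have : i \in nbhd e z :\ v by rewrite !inE iv.
move/(subsetP sub_z); rewrite !inE => /andP[nui evi].
move: zP; rewrite !inE negb_or => /andP[/andP[_ nuz] _].
have iz : i != z by apply: contraTneq ezi => ->; rewrite irr_e.
have iu : i != u by apply: contraTneq ezi => ->; rewrite sym_e.
by rewrite iz (negbTE iu) (negbTE nui) evi.
Qed.

End OuterNeighbours.

Theorem lemma2p6 (R : realType) (n : nat) (e : rel 'I_n) (u v w : 'I_n) :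
  simple_graph e -> connected_graph e ->
  v \in nbhd e u ->
  (deg e v + 2 <= deg e u)%N ->
  w \in nbhd e v -> w \notin u |: nbhd e u ->
  #|nbhd e v :\: (u |: nbhd e u)| \in [:: 1%N; 2%N] ->
  (forall z, z \in nbhd e v :\: (u |: nbhd e u) ->
     nbhd e z :\ v \subset nbhd e v :\: nbhd e u) ->
  forall q q' : R, is_q e q -> is_q (move_edge e v w u) q' -> q < q'.
Proof.
move=> [sym_e irr_e] conn_e; rewrite inE => euv deg_uv; rewrite inE => evw.
rewrite !inE negb_or => /andP[wu nuw] cardP nbhdP q q' [eig_q max_q] [_ max_q'].
set P := nbhd e v :\: (u |: nbhd e u) in cardP nbhdP *.
have symQ := signless_laplacian_sym sym_e R.
have [x x_neq0 [x_ge0 xQ]] :=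
  nonneg_eigenvector symQ (signless_laplacian_ge0 e R) eig_q max_q.
have eigen_x := signless_laplacian_eigen sym_e xQ.
have [b xb_neq0] := row_neq0 x_neq0.
have deg_u_le := deg_le_max_eigenvalue sym_e irr_e max_q u.
have sumP_le : \sum_(z in P) x 0 z <= x 0 v.
  apply: (weight_le_of_closed_nbhd x_ge0 eigen_x (v := v)) => [z zP|].
    exact: (outer_nbhd_sub sym_e irr_e zP (nbhdP z zP)).
  have P_le2 : (#|P| <= 2)%N by case/orP: cardP => /eqP ->.
  apply: le_trans (_ : (deg e u + 1)%:R <= q + 1); last by rewrite natrD lerD2r.
  by rewrite ler_nat outer_card_le.
have x_vu := eigenvector_lt_of_deg_gap x_ge0 eigen_x sym_e irr_e euv deg_uv deg_u_le
  (eigenvector_gt0 x_ge0 eigen_x conn_e xb_neq0 v) sumP_le.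
have vw : v != w by apply: contraTneq evw => ->; rewrite irr_e.
have uw : u != w by rewrite eq_sym.
have symQ' := signless_laplacian_sym (move_edge_sym u v w sym_e) R.
apply: (rayleigh_lt x_neq0 xQ (rayleigh_le symQ' max_q')).
rewrite signless_laplacian_move_edge // -addrA ltrDl subr_gt0.
have := x_ge0 v; have := x_ge0 w; nra.
Qed.
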